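(* Let $A,B$ be $K$-algebras with filtrations $\mathcal{F}=\{V_i\}_{i\ge0}$ and $\mathcal{G}=\{W_i\}_{i\ge0}$ respectively, and equip $A\oplus B$ with the filtration $\mathcal{H}=\{V_i\oplus W_i\}_{i\ge0}$. Then $$\mathrm{h}_{\mathrm{alg}}(A\oplus B,\mathcal{H})=\max\{\mathrm{h}_{\mathrm{alg}}(A,\mathcal{F}),\mathrm{h}_{\mathrm{alg}}(B,\mathcal{G})\}.$$
   Context: A filtration of $A$ is a family $\{V_n\}_{n\ge0}$ of subspaces with $0=V_0\subseteq V_1\subseteq\cdots$, $A=\bigcup_nV_n$, $V_nV_m\subseteq V_{n+m}$, with finite-dimensional quotients. $\mathrm{h}_{\mathrm{alg}}(A,\mathcal{F})=0$ if $A$ is finite-dimensional and otherwise $\limsup_n\frac1n\log\dim(V_n/V_{n-1})$. $A\oplus B$ is the direct product algebra with componentwise operations. *)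

From HB Require Import structures.
From mathcomp Require Import all_boot all_order all_algebra.
From mathcomp Require Import all_classical all_reals.
From mathcomp Require Import ereal sequences exp.
Set Implicit Arguments. Unset Strict Implicit. Unset Printing Implicit Defensive.
Import Order.TTheory GRing.Theory Num.Theory.
Local Open Scope classical_set_scope.
Local Open Scope ring_scope.

Section Filtrations.
Variables (K : fieldType) (A : algType K).

Definition is_subspace (U : set A) : Prop :=
  U 0 /\ forall (k : K) (u v : A), U u -> U v -> U (k *: u + v).

Definition lin_indep_mod (W : set A) (s : seq A) : Prop :=
  forall c : 'I_(size s) -> K,
    W (\sum_(i < size s) c i *: s`_i) -> forall i, c i = 0.

Definition spans_mod (V W : set A) (s : seq A) : Prop :=
  (forall x, x \in s -> V x) /\
  forall v, V v -> exists c : 'I_(size s) -> K,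
      W (v - \sum_(i < size s) c i *: s`_i).

Definition basis_mod (V W : set A) (s : seq A) : Prop :=
  lin_indep_mod W s /\ spans_mod V W s.

Definition fin_quot (V W : set A) : Prop := exists s, basis_mod V W s.

(* dim (V / W) when it is finite-dimensional (0 otherwise, never used) *)
Definition qdim (V W : set A) : nat :=
  match pselect (fin_quot V W) with
  | left h => size (projT1 (cid h))
  | right _ => 0%N
  end.

Definition fin_dim_alg : Prop :=
  exists s : seq A, forall a : A, exists c : 'I_(size s) -> K,
      a = \sum_(i < size s) c i *: s`_i.

Definition is_filtration (V : nat -> set A) : Prop :=
  V 0%N = [set 0] /\
  (forall n, is_subspace (V n)) /\
  (forall n, V n `<=` V n.+1) /\
  (forall a, exists n, V n a) /\
  (forall n m x y, V n x -> V m y -> V (n + m)%N (x * y)) /\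
  (forall n, fin_quot (V n.+1) (V n)).

(* algebraic entropy h_alg(A, F) in the extended reals;
   log 0 is read as -oo *)
Definition h_alg (R : realType) (V : nat -> set A) : \bar R :=
  if pselect fin_dim_alg then 0%E
  else limn_esup (fun n : nat =>
         if qdim (V n) (V n.-1) == 0%N then -oo%E
         else ((ln (qdim (V n) (V n.-1))%:R) / n%:R)%:E).

End Filtrations.

Definition sum_filtration (K : fieldType) (A B : algType K)
  (V : nat -> set A) (W : nat -> set B) : nat -> set (A * B)%type :=
  fun n => [set x | V n x.1 /\ W n x.2].

From HB Require Import structures.
From mathcomp Require Import all_boot all_order all_algebra.
From mathcomp Require Import all_classical all_reals.
From mathcomp Require Import ereal topology normedtype sequences exp.
Import Order.TTheory GRing.Theory Num.Theory numFieldNormedType.Exports.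
Set Implicit Arguments. Unset Strict Implicit. Unset Printing Implicit Defensive.
Local Open Scope classical_set_scope.
Local Open Scope ring_scope.

(* The n-th quotient of the sum filtration is (V_n / V_(n-1)) (+) (W_n / W_(n-1)),
   so its dimension is a_n + b_n, where a_n and b_n are the quotient dimensions
   for A and B.  Since max(a, b) <= a + b <= 2 max(a, b), the rate
   log(a_n + b_n) / n lies between the maximum of the two rates and that maximum
   plus log 2 / n, hence its lim sup is the maximum of the two lim sups.
   Finite dimensionality enters through the convention h_alg = 0: an algebra is
   finite dimensional exactly when its quotient dimensions vanish eventually,
   in which case its rate has lim sup -oo, while otherwise infinitely many
   quotients are nonzero and the lim sup is >= 0; so in every case the maximum
   of the entropies is the entropy of the sum. *)

Section LinearCombinations.
Variables (K : fieldType) (M : lmodType K).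
Implicit Types (s t : seq M) (c d : nat -> K).

Definition lincomb s c : M := \sum_(i < size s) c i *: s`_i.

Definition nat_coef n (c : 'I_n -> K) : nat -> K := fun k => oapp c 0 (insub k).

Definition join_coef n c d : nat -> K := fun k => if (k < n)%N then c k else d (k - n)%N.

Lemma nat_coefE n (c : 'I_n -> K) (i : 'I_n) : nat_coef c i = c i.
Proof. by rewrite /nat_coef valK. Qed.

Lemma lincomb_ord s (c : 'I_(size s) -> K) :
  \sum_(i < size s) c i *: s`_i = lincomb s (nat_coef c).
Proof. by apply: eq_bigr => i _; rewrite nat_coefE. Qed.

Lemma lincomb_nil c : lincomb [::] c = 0.
Proof. exact: big_ord0. Qed.

Lemma lincomb_cat s t c :
  lincomb (s ++ t) c = lincomb s c + lincomb t (fun i => c (size s + i)%N).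
Proof.
rewrite /lincomb size_cat big_split_ord; congr (_ + _); apply: eq_bigr => i _.
  by rewrite nth_cat /= ltn_ord.
by rewrite nth_cat /= ltnNge leq_addr addKn.
Qed.

Lemma lincomb_join_l s c d : lincomb s (join_coef (size s) c d) = lincomb s c.
Proof. by apply: eq_bigr => i _; rewrite /join_coef ltn_ord. Qed.

Lemma lincomb_join_r n t c d :
  lincomb t (fun i => join_coef n c d (n + i)%N) = lincomb t d.
Proof. by apply: eq_bigr => i _; rewrite /join_coef ltnNge leq_addr addKn. Qed.

Lemma lincomb_cat_join s t c d :
  lincomb (s ++ t) (join_coef (size s) c d) = lincomb s c + lincomb t d.
Proof. by rewrite lincomb_cat lincomb_join_l lincomb_join_r. Qed.

Lemma lincomb0 n c : lincomb (nseq n 0) c = 0.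
Proof. by rewrite /lincomb big1 // => i _; rewrite nth_nseq if_same scaler0. Qed.

End LinearCombinations.

Lemma lincomb_linear (K : fieldType) (M N : lmodType K) (f : {linear M -> N})
  (s : seq M) (c : nat -> K) : f (lincomb s c) = lincomb (map f s) c.
Proof.
rewrite /lincomb linear_sum size_map; apply: eq_bigr => i _.
by rewrite linearZ (nth_map 0).
Qed.

Section PairSeq.
Variables (K : fieldType) (M1 M2 : lmodType K).

Definition pair_seq (s : seq M1) (t : seq M2) : seq (M1 * M2) :=
  map (fun x => (x, 0)) s ++ map (pair 0) t.

Lemma size_pair_seq s t : size (pair_seq s t) = (size s + size t)%N.
Proof. by rewrite size_cat !size_map. Qed.

Lemma lincomb_pair_seq s t c :
  lincomb (pair_seq s t) c = (lincomb s c, lincomb t (fun i => c (size s + i)%N)).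
Proof.
have map0 (N : lmodType K) (T : Type) (u : seq T) :
    [seq 0 : N | _ <- u] = nseq (size u) 0.
  by elim: u => //= _ u ->.
rewrite [LHS]surjective_pairing (lincomb_linear fst) (lincomb_linear snd).
rewrite !map_cat -!map_comp !map_id !lincomb_cat !size_map !map0 !lincomb0.
by rewrite addr0 add0r.
Qed.

Lemma lincomb_pair_seq_join s t c d :
  lincomb (pair_seq s t) (join_coef (size s) c d) = (lincomb s c, lincomb t d).
Proof. by rewrite lincomb_pair_seq lincomb_join_l lincomb_join_r. Qed.

End PairSeq.

Section QuotientDimension.
Variables (K : fieldType) (A : algType K).
Implicit Types (U V W : set A) (s t : seq A) (c : nat -> K).

Lemma subspace_sumZ U n (c : 'I_n -> K) (x : 'I_n -> A) :
  is_subspace U -> (forall i, U (x i)) -> U (\sum_(i < n) c i *: x i).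
Proof.
move=> [U0 UD] Ux; apply: (big_ind U) => // [u v Uu Uv|i _].
  by have := UD 1 u v Uu Uv; rewrite scale1r.
by have := UD (c i) (x i) 0 (Ux i) U0; rewrite addr0.
Qed.

Lemma subspace_lincomb U s c :
  is_subspace U -> (forall x, x \in s -> U x) -> U (lincomb s c).
Proof. by move=> sU sUs; apply: subspace_sumZ => // i; apply/sUs/mem_nth. Qed.

Lemma fin_dim_algP :
  fin_dim_alg A <-> exists s, forall a, exists c, a = lincomb s c.
Proof.
split=> -[s span]; exists s => a; have [c ->] := span a.
  by exists (nat_coef c); rewrite lincomb_ord.
by exists (fun j : 'I_(size s) => c j).
Qed.

Lemma lin_indep_modP W s : lin_indep_mod W s <->
  (forall c, W (lincomb s c) -> forall i, (i < size s)%N -> c i = 0).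
Proof.
split=> [indep c Wc i lt_is | indep c].
  exact: (indep (fun j : 'I_(size s) => c j) Wc (Ordinal lt_is)).
by rewrite lincomb_ord => /indep indep_c i; rewrite -nat_coefE indep_c.
Qed.

Lemma spans_modP V W s : spans_mod V W s <->
  (forall x, x \in s -> V x) /\ (forall v, V v -> exists c, W (v - lincomb s c)).
Proof.
split=> -[sV span]; split=> // v /span [c Wc].
  by exists (nat_coef c); rewrite -lincomb_ord.
by exists (fun j : 'I_(size s) => c j).
Qed.

(* If [s] were longer than [t], the coordinate matrix of [s] in terms of [t]
   would have a nonzero left kernel vector, i.e. a nontrivial relation among
   the [s`_j] modulo [W]. *)
Lemma lin_indep_size_le V W s t : is_subspace W ->
  lin_indep_mod W s -> (forall x, x \in s -> V x) -> spans_mod V W t ->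
  (size s <= size t)%N.
Proof.
move=> sW indep sV [_ span]; rewrite leqNgt; apply/negP => lt_ts.
have /choice [C WC] : forall j : 'I_(size s), exists C : 'I_(size t) -> K,
    W (s`_j - \sum_(i < size t) C i *: t`_i).
  by move=> j; apply/span/sV/mem_nth.
pose M : 'M[K]_(size s, size t) := \matrix_(j, i) C j i.
have /rowV0Pn [u /sub_kermxP uM /rV0Pn [k nz_uk]] : kermx M != 0.
  rewrite kermx_eq0 /row_free neq_ltn (leq_ltn_trans (rank_leq_col M)) //.
have u_rel : \sum_(j < size s) u 0 j *: \sum_(i < size t) C j i *: t`_i = 0.
  under eq_bigr do rewrite scaler_sumr; rewrite exchange_big /=.
  apply: big1 => i _; under eq_bigr do rewrite scalerA; rewrite -scaler_suml.
  have := congr1 (fun N : 'rV_(size t) => N 0 i) uM; rewrite !mxE => uMi.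
  suff -> : \sum_(j < size s) u 0 j * C j i = 0 by rewrite scale0r.
  by rewrite -[RHS]uMi; apply: eq_bigr => j _; rewrite mxE.
have : W (\sum_(j < size s) u 0 j *: s`_j).
  have -> : \sum_(j < size s) u 0 j *: s`_j =
      \sum_(j < size s) u 0 j *: (s`_j - \sum_(i < size t) C j i *: t`_i).
    by under [RHS]eq_bigr do rewrite scalerBr; rewrite sumrB u_rel subr0.
  exact: subspace_sumZ.
by move/indep/(_ k)/eqP; rewrite (negbTE nz_uk).
Qed.

Lemma qdim_basis V W s : is_subspace W -> basis_mod V W s -> qdim V W = size s.
Proof.
move=> sW [indep_s span_s]; rewrite /qdim; case: pselect => [fq|]; last first.
  by case; exists s.
case: (cid fq) => b [indep_b span_b] /=; apply/eqP; rewrite eqn_leq.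
by rewrite (lin_indep_size_le sW indep_b (proj1 span_b) span_s)
           (lin_indep_size_le sW indep_s (proj1 span_s) span_b).
Qed.

Lemma basis_mod_nil V W : V `<=` W -> basis_mod V W [::].
Proof.
move=> VW; split; first by move=> c _ [].
by apply/spans_modP; split=> // v /VW Wv; exists (fun=> 0); rewrite lincomb_nil subr0.
Qed.

Lemma qdim_eq0P V W : is_subspace W -> fin_quot V W -> qdim V W = 0%N <-> V `<=` W.
Proof.
move=> sW [s bs]; split=> [|VW]; last by rewrite (qdim_basis sW (basis_mod_nil VW)).
rewrite (qdim_basis sW bs) => /size0nil s0 v Vv; move: bs => [_ /spans_modP [_ span]].
by have [c] := span v Vv; rewrite s0 lincomb_nil subr0.
Qed.

End QuotientDimension.

Section Filtration.
Variables (K : fieldType) (A : algType K) (V : nat -> set A).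
Hypothesis hV : is_filtration V.

Lemma filtration_subspace n : is_subspace (V n).
Proof. by case: hV => _ []. Qed.

Lemma filtration_le n m : (n <= m)%N -> V n `<=` V m.
Proof.
case: hV => _ [_ [Vsub _]] /subnK <-; elim: (m - n)%N => [|k IH] //= x.
by move/IH/Vsub.
Qed.

Lemma filtration_fin_quot n : fin_quot (V n) (V n.-1).
Proof.
case: n => [|n]; last by case: hV => _ [_ [_ [_ [_ fq]]]].
by exists [::]; apply: basis_mod_nil.
Qed.

Lemma filtration_bound_seq (s : seq A) : exists N, forall x, x \in s -> V N x.
Proof.
case: hV => _ [_ [_ [exhaust _]]].
elim: s => [|x s [N sN]]; first by exists 0%N.
have [n Vx] := exhaust x; exists (maxn n N) => y; rewrite inE => /predU1P [->|ys].
  exact: filtration_le (leq_maxl n N) _ Vx.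
exact: filtration_le (leq_maxr n N) _ (sN y ys).
Qed.

Lemma filtration_finite_span n :
  exists s, forall v, V n v -> exists c, v = lincomb s c.
Proof.
elim: n => [|n [s span_s]].
  exists [::] => v; case: hV => -> _ ->; exists (fun=> 0); by rewrite lincomb_nil.
have [b [_ /spans_modP [_ span_b]]] := filtration_fin_quot n.+1.
exists (b ++ s) => v /span_b [c /span_s [d vcd]].
by exists (join_coef (size b) c d); rewrite lincomb_cat_join -vcd addrC subrK.
Qed.

Lemma filtration_qdim0_sub N :
  (forall n, (N < n)%N -> qdim (V n) (V n.-1) = 0%N) -> forall n, V n `<=` V N.
Proof.
move=> qdim0; elim=> [|n IH]; first exact: filtration_le.
case: (leqP n.+1 N) => [le_nN|lt_Nn]; first exact: filtration_le.
apply: subset_trans IH.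
by apply/(qdim_eq0P (filtration_subspace n) (filtration_fin_quot n.+1))/qdim0.
Qed.

Lemma fin_dim_alg_filtrationP : fin_dim_alg A <->
  exists N, forall n, (N < n)%N -> qdim (V n) (V n.-1) = 0%N.
Proof.
rewrite fin_dim_algP; split=> [[s span]|[N qdim0]].
  have [N sN] := filtration_bound_seq s; exists N => n lt_Nn.
  apply/(qdim_eq0P (filtration_subspace _) (filtration_fin_quot n)) => v _.
  have [c ->] := span v; apply: (filtration_le (n := N)).
    by rewrite -ltnS prednK ?(leq_trans _ lt_Nn).
  exact: subspace_lincomb (filtration_subspace N) sN.
have [s span] := filtration_finite_span N; exists s => a.
case: hV => _ [_ [_ [exhaust _]]]; have [n Va] := exhaust a.
exact/span/(filtration_qdim0_sub qdim0 Va).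
Qed.

End Filtration.

Section ProductQuotient.
Variables (K : fieldType) (A B : algType K).

Lemma subspace_setX (V1 : set A) (W1 : set B) :
  is_subspace V1 -> is_subspace W1 -> is_subspace (V1 `*` W1).
Proof.
move=> [V0 VD] [W0 WD]; split=> // k u v [u1 u2] [v1 v2].
by split; [apply: VD | apply: WD].
Qed.

Lemma basis_mod_setX (V1 V2 : set A) (W1 W2 : set B) s t :
  V1 0 -> W1 0 -> basis_mod V1 V2 s -> basis_mod W1 W2 t ->
  basis_mod (V1 `*` W1) (V2 `*` W2) (pair_seq s t).
Proof.
move=> V0 W0 [/lin_indep_modP indep_s /spans_modP [sV span_s]].
move=> [/lin_indep_modP indep_t /spans_modP [tW span_t]]; split.
  apply/lin_indep_modP => c; rewrite lincomb_pair_seq size_pair_seq.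
  move=> [/indep_s cs /indep_t ct] i lt_i.
  have [/cs //|le_si] := ltnP i (size s).
  by rewrite -(subnKC le_si) ct // -(ltn_add2l (size s)) subnKC.
apply/spans_modP; split.
  move=> x; rewrite mem_cat => /orP [] /mapP [y y_in ->].
    by split; [apply: sV|].
  by split; [|apply: tW].
move=> [v w] [/span_s [c Vc] /span_t [d Wd]]; exists (join_coef (size s) c d).
by rewrite lincomb_pair_seq_join.
Qed.

Lemma qdim_setX (V1 V2 : set A) (W1 W2 : set B) :
  is_subspace V1 -> is_subspace W1 -> is_subspace V2 -> is_subspace W2 ->
  fin_quot V1 V2 -> fin_quot W1 W2 ->
  qdim (V1 `*` W1) (V2 `*` W2) = (qdim V1 V2 + qdim W1 W2)%N.
Proof.
move=> [V0 _] [W0 _] sV2 sW2 [s bs] [t bt].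
rewrite (qdim_basis sV2 bs) (qdim_basis sW2 bt) -size_pair_seq.
exact/qdim_basis/basis_mod_setX/bt/bs/W0/V0/subspace_setX.
Qed.

End ProductQuotient.

Section SumFiltration.
Variables (K : fieldType) (A B : algType K) (V : nat -> set A) (W : nat -> set B).
Hypotheses (hV : is_filtration V) (hW : is_filtration W).

Lemma qdim_sum_filtration n :
  qdim (sum_filtration V W n) (sum_filtration V W n.-1) =
  (qdim (V n) (V n.-1) + qdim (W n) (W n.-1))%N.
Proof.
by apply: qdim_setX; apply: filtration_subspace || apply: filtration_fin_quot.
Qed.

Lemma sum_filtration_is_filtration : is_filtration (sum_filtration V W).
Proof.
have [V0 [_ [_ [exhaustV [mulV _]]]]] := hV.
have [W0 [_ [_ [exhaustW [mulW _]]]]] := hW.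
split; [|split; [|split; [|split; [|split]]]].
- rewrite /sum_filtration V0 W0; apply/seteqP; split=> [[a b] [/= -> ->]|_ ->] //.
- by move=> n; apply: subspace_setX; apply: filtration_subspace.
- by move=> n x [/(filtration_le hV (leqnSn n)) ? /(filtration_le hW (leqnSn n)) ?].
- move=> [a b]; have [n Va] := exhaustV a; have [m Wb] := exhaustW b.
  exists (maxn n m); split.
    exact: (filtration_le hV (leq_maxl n m)).
  exact: (filtration_le hW (leq_maxr n m)).
- by move=> n m x y [Vx Wx] [Vy Wy]; split; [apply: mulV | apply: mulW].
- move=> n; have [s bs] := filtration_fin_quot hV n.+1.
  have [t bt] := filtration_fin_quot hW n.+1; exists (pair_seq s t).
  by apply: basis_mod_setX bs bt; [case: (filtration_subspace hV n.+1)|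
                                   case: (filtration_subspace hW n.+1)].
Qed.

Lemma fin_dim_alg_sum :
  fin_dim_alg (A * B)%type <-> fin_dim_alg A /\ fin_dim_alg B.
Proof.
rewrite (fin_dim_alg_filtrationP sum_filtration_is_filtration).
rewrite (fin_dim_alg_filtrationP hV) (fin_dim_alg_filtrationP hW).
split=> [[N qdim0]|[[N1 qdimV0] [N2 qdimW0]]].
  by split; exists N => n /qdim0 /eqP;
    rewrite qdim_sum_filtration addn_eq0 => /andP [/eqP ? /eqP ?].
exists (maxn N1 N2) => n; rewrite gtn_max => /andP [lt1 lt2].
by rewrite qdim_sum_filtration qdimV0 ?qdimW0.
Qed.

End SumFiltration.

Section LimitSuperior.
Variable R : realType.
Local Open Scope ereal_scope.
Implicit Types (u v : (\bar R)^nat).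

Lemma limn_esupE u : limn_esup u = ereal_inf (range (esups u)).
Proof. by rewrite limn_esup_lim; apply/cvg_lim/cvg_esups_inf. Qed.

Lemma limn_esup_le_esups u n : limn_esup u <= esups u n.
Proof. by rewrite limn_esupE; apply: ereal_inf_lbound; exists n. Qed.

Lemma le_limn_esup u v :
  (\forall n \near \oo, u n <= v n) -> limn_esup u <= limn_esup v.
Proof.
move=> [N _ uv]; rewrite !limn_esup_lim.
apply: lee_lim; [exact: is_cvg_esups|exact: is_cvg_esups|].
near=> m; apply: ge_ereal_sup => _ [k /= mk <-].
apply: le_trans (uv k _) _; first by apply: leq_trans mk; near: m; exists N.
by apply: ereal_sup_ubound; exists k.
Unshelve. all: by end_near. Qed.

Lemma limn_esup_max u v :
  limn_esup (fun n => maxe (u n) (v n)) = maxe (limn_esup u) (limn_esup v).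
Proof.
apply/eqP; rewrite eq_le ge_max !le_limn_esup ?andbT; last 2 first.
- by apply: nearW => n; rewrite le_max lexx orbT.
- by apply: nearW => n; rewrite le_max lexx.
rewrite leNgt; apply/negP; rewrite gt_max => /andP [].
rewrite limn_esupE => /ereal_inf_lt [_ [N1 _ <-] lt1].
rewrite limn_esupE => /ereal_inf_lt [_ [N2 _ <-] lt2].
set N := maxn N1 N2.
have : esups (fun n => maxe (u n) (v n)) N <= maxe (esups u N1) (esups v N2).
  apply: ge_ereal_sup => _ [k /= Nk <-]; apply: le_max2.
    by apply: ereal_sup_ubound; exists k => //; apply: leq_trans Nk; apply: leq_maxl.
  by apply: ereal_sup_ubound; exists k => //; apply: leq_trans Nk; apply: leq_maxr.
rewrite leNgt => /negP; apply; apply: lt_le_trans (limn_esup_le_esups _ N).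
by rewrite gt_max lt1 lt2.
Qed.

Lemma limn_esupDr u (e : R) :
  limn_esup (fun n => u n + e%:E) = limn_esup u + e%:E.
Proof.
rewrite -[LHS]oppeK -limn_einfN.
have -> : -%E \o (fun n => u n + e%:E) = (fun n => (- e)%:E + (-%E \o u) n).
  by apply: funext => n /=; rewrite oppeD ?fin_num_adde_defl // addeC.
rewrite limn_einf_shift // limn_einfN oppeD ?fin_num_adde_defr //.
by rewrite oppeK -EFinN opprK addeC.
Qed.

Lemma le_limn_esup_vanishing u v (eps : R^nat) : eps @ \oo --> 0%R ->
  (forall n, u n <= v n + (eps n)%:E) -> limn_esup u <= limn_esup v.
Proof.
move=> eps0 uv; apply/lee_addgt0Pr => e e0; rewrite -limn_esupDr.
apply: le_limn_esup; near=> n; apply: le_trans (uv n) _; apply: leeD2l; rewrite lee_fin.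
apply: ler_normlW; near: n; exact: cvgr0_norm_le.
Unshelve. all: by end_near. Qed.

Lemma limn_esup_eventually_Ny u :
  (\forall n \near \oo, u n = -oo) -> limn_esup u = -oo.
Proof.
move=> uNy; apply: (cvgNy_limn_einf_sup _).2; apply/cvgeNyPle => M.
by apply: filterS uNy => n ->; apply: leNye.
Qed.

Lemma limn_esup_ge_often u l :
  (forall N, exists2 n, (N <= n)%N & l <= u n) -> l <= limn_esup u.
Proof.
move=> often; rewrite limn_esupE; apply: le_ereal_inf_tmp => _ [N _ <-].
have [n Nn lu] := often N; apply: le_trans lu _.
by apply: ereal_sup_ubound; exists n.
Qed.

End LimitSuperior.

Section LogRate.
Variable R : realType.
Local Open Scope ereal_scope.

Definition log_rate (d n : nat) : \bar R :=
  if d == 0%N then -oo else (ln d%:R / n%:R)%:E.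

Lemma log_rate_ge0 d n : d != 0%N -> 0 <= log_rate d n.
Proof.
move=> d0; rewrite /log_rate (negbTE d0) lee_fin divr_ge0 // ln_ge0 //.
by rewrite ler1n lt0n.
Qed.

Lemma le_log_rate a b n : (a <= b)%N -> log_rate a n <= log_rate b n.
Proof.
rewrite /log_rate; have [_ _|a0 le_ab] := eqVneq a 0%N; first exact: leNye.
have b0 : b != 0%N by rewrite -lt0n (leq_trans _ le_ab) // lt0n.
rewrite (negbTE b0) lee_fin ler_wpM2r ?invr_ge0 //.
by rewrite ler_ln ?posrE ?ltr0n ?lt0n // ler_nat.
Qed.

Lemma log_rate_double a n : a != 0%N ->
  log_rate a.*2 n = log_rate a n + (ln 2 / n%:R)%:E.
Proof.
move=> a0; rewrite /log_rate double_eq0 (negbTE a0) -EFinD -mulrDl.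
by rewrite -mul2n natrM lnM ?posrE ?ltr0n ?lt0n // addrC.
Qed.

Lemma log_rateD_le a b n :
  log_rate (a + b) n <= maxe (log_rate a n) (log_rate b n) + (ln 2 / n%:R)%:E.
Proof.
wlog le_ba : a b / (b <= a)%N.
  move=> le_rate; have [/le_rate //|/ltnW/le_rate] := leqP b a.
  by rewrite addnC maxC.
have [a0|a0] := eqVneq a 0%N.
  by move: le_ba; rewrite a0 leqn0 => /eqP ->; rewrite /log_rate eqxx leNye.
apply: le_trans (le_log_rate n (_ : a + b <= a.*2)%N) _.
  by rewrite -addnn leq_add2l.
by rewrite log_rate_double //; apply: leeD2r; rewrite le_max lexx.
Qed.

Lemma limn_esup_log_rateD (a b : nat -> nat) :
  limn_esup (fun n => log_rate (a n + b n) n) =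
  maxe (limn_esup (fun n => log_rate (a n) n))
       (limn_esup (fun n => log_rate (b n) n)).
Proof.
rewrite -limn_esup_max; apply/eqP; rewrite eq_le; apply/andP; split.
  apply: le_limn_esup_vanishing (fun n => log_rateD_le (a n) (b n) n).
  rewrite -(mulr0 (ln (2 : R))); apply: cvgMl_tmp.
  apply/gtr0_cvgV0; last exact: cvgr_idn.
  by apply: filterS (nbhs_infty_gt 0) => n; rewrite ltr0n.
apply: le_limn_esup; apply: nearW => n.
by rewrite ge_max !le_log_rate ?leq_addr ?leq_addl.
Qed.

End LogRate.

Section Entropy.
Variables (R : realType) (K : fieldType) (A : algType K).
Local Open Scope ereal_scope.

Definition limsup_log_rate (V : nat -> set A) : \bar R :=
  limn_esup (fun n => log_rate R (qdim (V n) (V n.-1)) n).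

Lemma h_alg_fin_dim (V : nat -> set A) : fin_dim_alg A -> h_alg R V = 0.
Proof. by rewrite /h_alg; case: pselect. Qed.

Lemma h_alg_inf_dim (V : nat -> set A) :
  ~ fin_dim_alg A -> h_alg R V = limsup_log_rate V.
Proof. by rewrite /h_alg; case: pselect. Qed.

Lemma limsup_log_rate_fin_dim (V : nat -> set A) :
  is_filtration V -> fin_dim_alg A -> limsup_log_rate V = -oo.
Proof.
move=> hV /(fin_dim_alg_filtrationP hV) [N qdim0].
apply: limn_esup_eventually_Ny; near=> n; rewrite /log_rate qdim0 //.
by near: n; exists N.+1.
Unshelve. all: by end_near. Qed.

Lemma limsup_log_rate_ge0 (V : nat -> set A) :
  is_filtration V -> ~ fin_dim_alg A -> 0 <= limsup_log_rate V.
Proof.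
move=> hV inf_dim; apply: limn_esup_ge_often => N.
have /existsNP [n /not_implyP [lt_Nn /eqP qdim_n]] :
    ~ forall n, (N < n)%N -> qdim (V n) (V n.-1) = 0%N.
  by move=> qdim0; apply/inf_dim/(fin_dim_alg_filtrationP hV); exists N.
by exists n; [exact: ltnW | exact: log_rate_ge0].
Qed.

End Entropy.

Lemma limsup_log_rate_sum_filtration (R : realType) (K : fieldType)
  (A B : algType K) (V : nat -> set A) (W : nat -> set B) :
  is_filtration V -> is_filtration W ->
  limsup_log_rate R (sum_filtration V W) =
  Order.max (limsup_log_rate R V) (limsup_log_rate R W).
Proof.
move=> hV hW; rewrite /limsup_log_rate -limn_esup_log_rateD.
by congr limn_esup; apply: funext => n; rewrite qdim_sum_filtration.
Qed.

Theorem proposition4p7 (R : realType) (K : fieldType) (A B : algType K)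
  (V : nat -> set A) (W : nat -> set B) :
  is_filtration V -> is_filtration W ->
  h_alg R (sum_filtration V W) = Order.max (h_alg R V) (h_alg R W).
Proof.
move=> hV hW; have fin_dim_sum := fin_dim_alg_sum hV hW.
have [fA|nfA] := pselect (fin_dim_alg A); have [fB|nfB] := pselect (fin_dim_alg B).
- by rewrite !h_alg_fin_dim ?maxxx //; apply/fin_dim_sum.
all: rewrite h_alg_inf_dim ?limsup_log_rate_sum_filtration //;
  last by move/fin_dim_sum => [].
- rewrite h_alg_fin_dim // h_alg_inf_dim // limsup_log_rate_fin_dim //.
  by rewrite !max_r ?leNye ?limsup_log_rate_ge0.
- rewrite h_alg_inf_dim // h_alg_fin_dim // (limsup_log_rate_fin_dim _ hW) //.
  by rewrite !max_l ?leNye ?limsup_log_rate_ge0.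
- by rewrite !h_alg_inf_dim.
Qed.
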